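(* For every $m\ge 2$ and $n\ge 2$, the $m$th order $n$-dimensional Pascal tensor is strongly completely positive.
   Context: The $m$th order $n$-dimensional Pascal tensor is $\mathcal{P}=(p_{i_1\dots i_m})$ with $p_{i_1\dots i_m}=\frac{(i_1+\dots+i_m-m)!}{(i_1-1)!\cdots(i_m-1)!}$ for $i_1,\dots,i_m\in\{1,\dots,n\}$ (for $m=2$ this is the symmetric Pascal matrix). For $\mathbf{u}\in\mathbb{R}^n$, $\mathbf{u}^m$ is the tensor with entries $u_{i_1}\cdots u_{i_m}$. A symmetric tensor $\mathcal{A}$ of order $m$ and dimension $n$ is strongly completely positive if there are nonnegative vectors $\mathbf{u}^{(1)},\dots,\mathbf{u}^{(r)}\in\mathbb{R}^n$ spanning $\mathbb{R}^n$ such that $\mathcal{A}=(\mathbf{u}^{(1)})^m+\dots+(\mathbf{u}^{(r)})^m$. *)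

From mathcomp Require Import all_boot all_order all_fingroup all_algebra.
From mathcomp Require Import reals.
Set Implicit Arguments. Unset Strict Implicit. Unset Printing Implicit Defensive.
Import Order.TTheory GRing.Theory Num.Theory.
Local Open Scope ring_scope.

(* Indices are
   0-based: the paper's index i_k corresponds to (idx k).+1. *)
Definition tensor (R : Type) (m n : nat) := ({ffun 'I_m -> 'I_n} -> R).

(* Pascal tensor: p_{i_1..i_m} = (i_1+...+i_m-m)! / ((i_1-1)! ... (i_m-1)!),
   in 0-based indices (sum_k j_k)! / prod_k (j_k)!. *)
Definition pascal_tensor (R : realType) (m n : nat) : tensor R m n :=
  fun idx => ((\sum_(k < m) (idx k : nat))`!)%:R /
             (\prod_(k < m) ((idx k : nat)`!)%:R).
Arguments pascal_tensor R m n : clear implicits.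

Definition tpow (R : realType) (m n : nat) (u : 'rV[R]_n) : tensor R m n :=
  fun idx => \prod_(k < m) u 0 (idx k).
Arguments tpow R m n u : clear implicits.

Definition symmetric_tensor (R : realType) (m n : nat) (A : tensor R m n) :=
  forall (s : 'S_m) (idx : {ffun 'I_m -> 'I_n}),
    A [ffun k => idx (s k)] = A idx.

Definition strongly_completely_positive (R : realType) (m n : nat)
    (A : tensor R m n) : Prop :=
  symmetric_tensor A /\
  exists (r : nat) (U : 'M[R]_(r, n)),
    (forall k j, 0 <= U k j) /\
    (\rank U = n)%N /\
    (forall idx, A idx = \sum_(k < r) tpow R m n (row k U) idx).
Arguments strongly_completely_positive R m n A : clear implicits.

From HB Require Import structures.
From mathcomp Require Import all_boot all_order all_fingroup all_algebra.
From mathcomp Require Import reals polyrcf complex.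
From mathcomp Require Import ring lra.
Set Implicit Arguments. Unset Strict Implicit. Unset Printing Implicit Defensive.
Import Order.TTheory GRing.Theory Num.Theory.
Local Open Scope ring_scope.

(* The Pascal entry (j_1 + ... + j_m)! / (j_1! ... j_m!) is the integral over
   [0, +oo) of prod_k x^(j_k) / j_k! against e^(-x) dx.  Gauss quadrature for
   this weight with N = m n nodes (the roots of the Laguerre polynomial L_N,
   which are simple and positive) has positive weights w_i and is exact up to
   degree 2N - 1 >= m (n - 1), so the Pascal tensor is the sum of the m-th
   powers of the nonnegative vectors u_i = w_i^(1/m) (x_i^j / j!)_j, which span
   R^n because the nodes are distinct.
   The integral is only used through its moments k!: positivity on squares
   comes from the Gram decomposition (a + b)! = a! b! sum_l C(a, l) C(b, l),
   and the real-rootedness of L_N from its orthogonality, since a non-real or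
   a double root would give a factorisation L_N = ((X - a)^2 + b^2) q with
   L(L_N q) > 0. *)

Lemma uniq_notin_rem (T : eqType) (s : seq T) :
  {in s, forall x, x \notin rem x s} -> uniq s.
Proof.
elim: s => [//|x s IHs] notin_rem /=.
have x_notin_s : x \notin s by have := notin_rem x (mem_head x s); rewrite /= eqxx.
rewrite x_notin_s IHs // => y y_in_s.
have := notin_rem y; rewrite in_cons y_in_s orbT /= eq_sym => /(_ isT).
have y_neq_x : y != x by apply: contraNneq x_notin_s => <-.
by rewrite (negPf y_neq_x) in_cons negb_or => /andP[].
Qed.

Lemma fact_addn_binomial_sum (a b K : nat) : (a < K)%N ->
  (a + b)`! = (a`! * b`! * \sum_(l < K) 'C(a, l) * 'C(b, l))%N.
Proof.
move=> aK; set f := fun l => ('C(a, l) * 'C(b, l))%N.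
have -> : (\sum_(l < K) f l = 'C(a + b, a))%N.
  rewrite -binomial.Vandermonde [RHS](reindex_inj rev_ord_inj) /=.
  transitivity (\sum_(l < a.+1) f l)%N.
    rewrite (big_ord_widen K f aK) [RHS]big_mkcond; apply: eq_bigr => l _.
    by case: ltnP => // /bin_small; rewrite /f => ->.
  apply: eq_bigr => [[l /=]]; rewrite ltnS => la _.
  by rewrite /f subSS subKn // bin_sub.
by rewrite -(bin_fact (leq_addr b a)) addKn mulnC.
Qed.

Lemma coef_exp_XaddC1 (R : nzSemiRingType) n i :
  (('X + 1) ^+ n : {poly R})`_i = 'C(n, i)%:R.
Proof.
rewrite exprD1n coef_sum.
under eq_bigr => j _ do rewrite coefMn coefXn.
case: (ltnP i n.+1) => [lt_in | le_ni]; last first.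
  rewrite bin_small // big1 // => j _.
  by rewrite gtn_eqF ?mul0rn // (leq_trans (ltn_ord j) le_ni).
rewrite (bigD1 (Ordinal lt_in)) //= eqxx mulr1n big1 ?addr0 // => j.
by rewrite -val_eqE /= eq_sym => /negPf ->; rewrite mul0rn.
Qed.

Lemma alternating_binomial_sum (R : comNzRingType) N i : (i < N)%N ->
  \sum_(k < N.+1) (-1) ^+ k * 'C(N, k)%:R * 'C(k + i, i)%:R = 0 :> R.
Proof.
move=> lt_iN; pose Y : {poly R} := 'X + 1.
have vanish : (Y ^+ i * (- Y + 1) ^+ N)`_i = 0.
  by rewrite opprD subrK exprNn mulrA coefMXn lt_iN.
rewrite -[RHS]vanish (exprD1n (- Y) N) mulr_sumr coef_sum; apply: eq_bigr => k _.
rewrite [in RHS]mulrnAr [in RHS]coefMn (exprNn Y) mulrCA -exprD.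
rewrite -(rmorph_sign polyC) coefCM.
by rewrite coef_exp_XaddC1 addnC -mulr_natr; ring.
Qed.

Lemma mul_XsubC_conjc (R : rcfType) (z : R[i]) :
  ('X - z%:P) * ('X - (z^*%C)%:P) = map_poly (real_complex R)
    (('X - (complex.Re z)%:P) ^+ 2 + ((complex.Im z) ^+ 2)%:P).
Proof.
rewrite rmorphD rmorphXn rmorphB /= map_polyX !map_polyC /=.
case: z => a b /=.
have -> : (a +i* b)%C = (a%:C)%C + 'i%C * (b%:C)%C by simpc.
have -> : (a -i* b)%C = (a%:C)%C - 'i%C * (b%:C)%C by simpc.
rewrite rmorphXn !(polyCD, polyCN, polyCM, polyC_exp).
have sqr_iP : ('i%C%:P ^+ 2 : {poly R[i]}) = -1 by rewrite -polyC_exp sqr_i polyCN.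
transitivity (('X - ((a%:C)%C)%:P) ^+ 2 - 'i%C%:P ^+ 2 * ((b%:C)%C)%:P ^+ 2).
  by ring.
by rewrite sqr_iP; ring.
Qed.

Lemma conjc_id_real (R : realFieldType) (z : R[i]) :
  z^*%C = z -> ((complex.Re z)%:C)%C = z.
Proof. by case: z => a b [] b_opp; have -> : b = 0 by lra. Qed.

Section GaussQuadrature.
Variables (R : rcfType) (L : {scalar {poly R}}).
Hypothesis L_sqr_gt0 : forall q : {poly R}, q != 0 -> 0 < L (q * q).
Variables (N : nat) (p : {poly R}).
Hypothesis size_p : size p = N.+1.
Hypothesis p_orth : forall q : {poly R}, (size q <= N)%N -> L (p * q) = 0.

Lemma orth_ndvd_quadratic a b : ~~ ((('X - a%:P) ^+ 2 + (b ^+ 2)%:P) %| p).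
Proof.
set d := _ + _; rewrite dvdp_eq; apply/negP => /eqP; set q := p %/ d => p_eq.
have size_d : size d = 3.
  rewrite size_polyDl size_exp_XsubC //.
  by rewrite (leq_ltn_trans (size_polyC_leq1 _)).
have d_neq0 : d != 0 by rewrite -size_poly_eq0 size_d.
have q_neq0 : q != 0.
  by apply: contra_eq_neq size_p => q0; rewrite p_eq q0 mul0r size_poly0.
have size_q : (size q <= N)%N.
  by move: size_p; rewrite p_eq size_mul // size_d addn3 => -[<-].
have := p_orth size_q; rewrite p_eq.
have -> : q * d * q = (('X - a%:P) * q) * (('X - a%:P) * q) + (b ^+ 2) *: (q * q).
  by rewrite /d -mul_polyC; ring.
rewrite linearD linearZ /=.
have Xa_q_neq0 : ('X - a%:P) * q != 0 by rewrite mulf_neq0 ?polyXsubC_eq0.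
have := L_sqr_gt0 q_neq0; have := L_sqr_gt0 Xa_q_neq0; have := sqr_ge0 b; nra.
Qed.

Lemma orth_uniq_roots : exists2 s : seq R, size s = N & uniq s && all (root p) s.
Proof.
pose pC := map_poly (real_complex R) p.
have [r pC_eq] := closed_field_poly_normal pC.
have lead_neq0 : lead_coef pC != 0.
  by rewrite lead_coef_eq0 -size_poly_eq0 size_map_poly size_p.
have size_r : size r = N.
  by move: (size_map_poly (real_complex R) p); rewrite -/pC pC_eq size_scale //
    size_prod_XsubC size_p => -[].
have root_pC z : root pC z = (z \in r) by rewrite pC_eq rootZ // root_prod_XsubC.
have root_conj z : root pC z -> root pC z^*%C.
  rewrite -complex_root_conj; congr (root _ _); apply/polyP => i.
  by rewrite !coef_map /= oppr0.
have conj_notin_rem z : z \in r -> z^*%C \notin rem z r.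
  move=> z_in_r; apply/negP => zJ_in_rem.
  have : ('X - z%:P) * ('X - (z^*%C)%:P) %| pC.
    rewrite pC_eq dvdpZr // (perm_big _ (perm_to_rem z_in_r)) big_cons.
    rewrite (perm_big _ (perm_to_rem zJ_in_rem)) big_cons /= mulrA.
    exact: dvdp_mulIl.
  rewrite mul_XsubC_conjc dvdp_map; apply/negP; exact: orth_ndvd_quadratic.
have conj_real z : z \in r -> z^*%C = z.
  move=> z_in_r; apply/eqP; apply: contraNT (conj_notin_rem z z_in_r) => zJ_neq_z.
  have : z^*%C \in r by rewrite -root_pC root_conj ?root_pC.
  by rewrite (perm_mem (perm_to_rem z_in_r)) in_cons (negPf zJ_neq_z).
have uniq_r : uniq r.
  apply: uniq_notin_rem => z z_in_r.
  by have := conj_notin_rem z z_in_r; rewrite conj_real.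
have real_Re z : z \in r -> ((complex.Re z)%:C)%C = z by move/conj_real/conjc_id_real.
exists (map (@complex.Re R) r); first by rewrite size_map.
apply/andP; split.
  rewrite map_inj_in_uniq // => z1 z2 z1_in_r z2_in_r eq_Re.
  by rewrite -(real_Re z1) // -(real_Re z2) // eq_Re.
apply/allP => _ /mapP [z z_in_r ->].
have := z_in_r; rewrite -root_pC -{1}(real_Re z) // /root /pC horner_map /=.
by rewrite fmorph_eq0.
Qed.

Lemma gauss_quadrature (x : nat -> R) : (0 < N)%N -> injective x ->
    (forall i, (i < N)%N -> root p (x i)) ->
  exists2 w : 'I_N -> R, (forall i, 0 < w i) &
    forall f : {poly R}, (size f <= N.*2)%N -> L f = \sum_(i < N) w i * f.[x i].
Proof.
move=> N_gt0 x_inj x_root; pose l i : {poly R} := tnth (N.-lagrange x) i.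
have p_neq0 : p != 0 by rewrite -size_poly_eq0 size_p.
have quadrature (f : {poly R}) :
    (size f <= N.*2)%N -> L f = \sum_(i < N) L (l i) * f.[x i].
  move=> size_f.
  have f_at_nodes (i : 'I_N) : f.[x i] = (f %% p).[x i].
    rewrite {1}(divp_eq f p) hornerD hornerM.
    by rewrite (rootP (x_root i (ltn_ord i))) mulr0 add0r.
  (* Orthogonality kills the quotient by p; the remainder is interpolated. *)
  rewrite {1}(divp_eq f p) linearD /= mulrC p_orth ?add0r; last first.
    by rewrite size_divp // size_p leq_subLR addnn.
  rewrite {1}(lagrange_gen N_gt0 x_inj (p := f %% p)); last first.
    by rewrite -ltnS -size_p ltn_modp.
  rewrite linear_sum; apply: eq_bigr => i _.
  by rewrite mul_polyC linearZ /= mulrC f_at_nodes.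
exists (fun i => L (l i)) => // i.
have l_sample (j : 'I_N) : (l i).[x j] = (i == j)%:R.
  exact: lagrange_sample.
have l_neq0 : l i != 0 :> {poly R}.
  by apply: contra_eq_neq (l_sample i) => ->; rewrite horner0 eqxx eq_sym oner_neq0.
suff -> : L (l i) = L (l i * l i) by exact: L_sqr_gt0.
rewrite [in RHS]quadrature; last first.
  rewrite (leq_trans (size_polyMleq _ _)) // size_lagrange_ // -addnn.
  by case: (N) N_gt0.
rewrite (bigD1 i) //= big1 ?addr0 => [|j /negPf j_neq_i]; last first.
  by rewrite hornerM l_sample eq_sym j_neq_i !mulr0.
by rewrite hornerM l_sample eqxx !mulr1.
Qed.

End GaussQuadrature.

Section Lgamma.
Variable R : comNzRingType.
Implicit Types p q : {poly R}.

(* Lgamma p is the integral of p(x) e^(-x) over [0, +oo), defined through the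
   moments i!. *)
Definition Lgamma p : R := \sum_(i < size p) p`_i * (i`!)%:R.

Lemma Lgamma_widen n p :
  (size p <= n)%N -> Lgamma p = \sum_(i < n) p`_i * (i`!)%:R.
Proof.
move=> le_pn; rewrite /Lgamma (big_ord_widen n (fun i => p`_i * (i`!)%:R)) //.
rewrite big_mkcond; apply: eq_bigr => i _.
by case: ltnP => // /(nth_default 0) ->; rewrite mul0r.
Qed.

Fact Lgamma_is_linear : linear_for *%R Lgamma.
Proof.
move=> a p q; pose n := maxn (size p) (size q).
have le_pn : (size p <= n)%N by rewrite leq_maxl.
have le_qn : (size q <= n)%N by rewrite leq_maxr.
rewrite (Lgamma_widen le_pn) (Lgamma_widen le_qn) (@Lgamma_widen n); last first.
  by rewrite (leq_trans (size_polyD _ _)) // geq_max (leq_trans (size_scale_leq _ _)).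
rewrite mulr_sumr -big_split; apply: eq_bigr => i _.
by rewrite coefD coefZ mulrDl mulrA.
Qed.

HB.instance Definition _ :=
  GRing.isLinear.Build R {poly R} R *%R Lgamma Lgamma_is_linear.

Lemma LgammaXn k : Lgamma 'X^k = (k`!)%:R.
Proof.
rewrite /Lgamma size_polyXn big_ord_recr /= coefXn eqxx mul1r big1 ?add0r //.
by move=> i _; rewrite coefXn ltn_eqF // mul0r.
Qed.

Lemma Lgamma_mul p q : Lgamma (p * q) =
  \sum_(a < size p) \sum_(b < size q) p`_a * q`_b * ((a + b)`!)%:R.
Proof.
rewrite -{1}[p]coefK -{1}[q]coefK !poly_def mulr_suml linear_sum.
apply: eq_bigr => a _; rewrite mulr_sumr linear_sum; apply: eq_bigr => b _.
by rewrite -scalerAl -scalerAr scalerA -exprD linearZ /= LgammaXn.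
Qed.

Lemma Lgamma_sqr p : Lgamma (p * p) =
  \sum_(l < size p) (\sum_(a < size p) p`_a * (a`!)%:R * 'C(a, l)%:R) ^+ 2.
Proof.
rewrite Lgamma_mul; symmetry.
under eq_bigr => l _ do rewrite expr2 mulr_suml.
rewrite exchange_big; apply: eq_bigr => a _.
under eq_bigr => l _ do rewrite mulr_sumr.
rewrite exchange_big; apply: eq_bigr => b _.
rewrite (fact_addn_binomial_sum b (ltn_ord a)) !natrM natr_sum.
by rewrite !mulr_sumr; apply: eq_bigr => l _; rewrite natrM; ring.
Qed.

End Lgamma.

Lemma Lgamma_sqr_gt0 (R : realDomainType) (p : {poly R}) :
  p != 0 -> 0 < Lgamma (p * p).
Proof.
move=> p_neq0; have [K size_p] : exists K, size p = K.+1.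
  by exists (size p).-1; rewrite prednK // lt0n size_poly_eq0.
have lead_term : \sum_(a < K.+1) p`_a * (a`!)%:R * 'C(a, K)%:R = p`_K * (K`!)%:R.
  rewrite big_ord_recr /= binn mulr1 big1 ?add0r // => a _.
  by rewrite bin_small ?mulr0.
rewrite Lgamma_sqr size_p big_ord_recr /= lead_term.
apply: ltr_wpDl; first by apply: sumr_ge0 => l _; exact: sqr_ge0.
rewrite exprn_even_gt0 //= mulf_neq0 //; last by rewrite pnatr_eq0 -lt0n fact_gt0.
have <- : lead_coef p = p`_K by rewrite lead_coefE size_p.
by rewrite lead_coef_eq0.
Qed.

Section Laguerre.
Variable R : realFieldType.

Definition laguerre N : {poly R} :=
  \poly_(k < N.+1) ((-1) ^+ k * 'C(N, k)%:R / (k`!)%:R).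

Lemma size_laguerre N : size (laguerre N) = N.+1.
Proof.
rewrite size_poly_eq // binn mulr1 mulf_neq0 ?signr_eq0 //.
by rewrite invr_eq0 pnatr_eq0 -lt0n fact_gt0.
Qed.

Lemma Lgamma_laguerre_mulXn N i : (i < N)%N -> Lgamma (laguerre N * 'X^i) = 0.
Proof.
(* The k-th term is (-1)^k C(N, k) (k + i)! / k! = i! (-1)^k C(N, k) C(k + i, i). *)
move=> lt_iN; rewrite -[RHS](mulr0 (i`!)%:R) -(alternating_binomial_sum R lt_iN).
rewrite /laguerre poly_def mulr_suml linear_sum mulr_sumr; apply: eq_bigr => k _.
rewrite -scalerAl -exprD linearZ /= LgammaXn -(bin_fact (leq_addl k i)) addnK.
have fact_neq0 : (k`!)%:R != 0 :> R by rewrite pnatr_eq0 -lt0n fact_gt0.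
by rewrite !natrM; field.
Qed.

Lemma Lgamma_laguerre_orth N (q : {poly R}) :
  (size q <= N)%N -> Lgamma (laguerre N * q) = 0.
Proof.
move=> le_qN; rewrite -[q]coefK poly_def mulr_sumr linear_sum big1 // => i _.
rewrite -scalerAr linearZ /= Lgamma_laguerre_mulXn ?mulr0 //.
exact: leq_trans (ltn_ord i) le_qN.
Qed.

Lemma horner_laguerre_nonpos_gt0 N x : x <= 0 -> 0 < (laguerre N).[x].
Proof.
move=> x_le0; rewrite horner_poly big_ord_recl /= expr0 bin0 !mul1r invr1 mulr1.
apply: ltr_pwDl => //; apply: sumr_ge0 => k _.
rewrite mulrC !mulrA -exprMn mulrN1.
by rewrite !mulr_ge0 ?invr_ge0 ?exprn_ge0 ?oppr_ge0.
Qed.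

End Laguerre.
Lemma laguerre_gauss_quadrature (R : rcfType) N : (0 < N)%N ->
  exists (x : nat -> R) (w : 'I_N -> R),
  [/\ injective x, forall i : 'I_N, 0 < x i, forall i, 0 < w i &
      forall k, (k < N.*2)%N -> (k`!)%:R = \sum_(i < N) w i * x i ^+ k].
Proof.
move=> N_gt0.
have [s size_s /andP[uniq_s roots_s]] := orth_uniq_roots (@Lgamma_sqr_gt0 R)
  (size_laguerre R N) (@Lgamma_laguerre_orth R N).
have s_gt0 i : (i < N)%N -> 0 < s`_i.
  move=> lt_iN; have : root (laguerre R N) s`_i.
    by apply: (allP roots_s); rewrite mem_nth ?size_s.
  rewrite ltNge; apply: contraL => /(horner_laguerre_nonpos_gt0 N) /gt_eqF.
  by rewrite /root => ->.
(* The Lagrange basis of qpoly wants nodes injective on all of nat: the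
   negative values beyond N are padding. *)
pose x j := if (j < N)%N then s`_j else - j%:R.
have x_inj : injective x.
  move=> i j; rewrite /x; case: ltnP => iN; case: ltnP => jN.
  - by move/eqP; rewrite nth_uniq ?size_s // => /eqP.
  - by move=> si; have := s_gt0 i iN; rewrite si oppr_gt0 ltNge ler0n.
  - by move=> sj; have := s_gt0 j jN; rewrite -sj oppr_gt0 ltNge ler0n.
  - by move/oppr_inj/eqP; rewrite eqr_nat => /eqP.
have x_root i : (i < N)%N -> root (laguerre R N) (x i).
  by move=> lt_iN; rewrite /x lt_iN; apply: (allP roots_s); rewrite mem_nth ?size_s.
have [w w_gt0 quadrature] := gauss_quadrature (@Lgamma_sqr_gt0 R)
  (size_laguerre R N) (@Lgamma_laguerre_orth R N) N_gt0 x_inj x_root.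
exists x, w; split => // [i | k lt_k]; first by rewrite /x ltn_ord s_gt0.
rewrite -LgammaXn quadrature ?size_polyXn //.
by apply: eq_bigr => i _; rewrite hornerXn.
Qed.

Lemma mxrank_scaled_Vandermonde (F : fieldType) k n (c z : 'I_k -> F)
    (d : 'I_n -> F) :
    (n <= k)%N -> injective z -> (forall i, c i != 0) -> (forall j, d j != 0) ->
  \rank (\matrix_(i, j) (c i * z i ^+ j * d j)) = n.
Proof.
move=> le_nk z_inj c_neq0 d_neq0; rewrite -mxrank_tr; apply/eqP/inj_row_free => v.
set M := \matrix_(i, j) _ => vM0.
pose u := \row_j (v 0 j * d j); pose P := rVpoly u.
have P_root i : root P (z i).
  have := congr1 (fun A : 'rV_k => A 0 i) vM0; rewrite !mxE => vMi0.
  suff : c i * P.[z i] = 0 by move/eqP; rewrite mulf_eq0 (negPf (c_neq0 i)).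
  rewrite -{}vMi0 horner_poly mulr_sumr; apply: eq_bigr => j _.
  by rewrite valK !mxE; ring.
have P0 : P = 0.
  apply: (@roots_geq_poly_eq0 _ _ (map z (enum 'I_k))).
  - by apply/allP => _ /mapP [i _ ->].
  - by rewrite map_inj_uniq ?enum_uniq.
  - by rewrite size_map size_enum_ord (leq_trans (size_poly _ _)).
have u0 : u = 0 by rewrite -[u]rVpolyK -/P P0 linear0.
apply/rowP => j; have := congr1 (fun A : 'rV_n => A 0 j) u0; rewrite !mxE.
by move/eqP; rewrite mulf_eq0 (negPf (d_neq0 j)) orbF => /eqP.
Qed.

Lemma pascal_tensor_symmetric (R : realType) m n :
  symmetric_tensor (pascal_tensor R m n).
Proof.
move=> s idx; rewrite /pascal_tensor; congr (_%:R / _).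
  congr _`!; rewrite [in RHS](reindex_inj (@perm_inj _ s)).
  by apply: eq_bigr => k _; rewrite ffunE.
rewrite [in RHS](reindex_inj (@perm_inj _ s)).
by apply: eq_bigr => k _; rewrite ffunE.
Qed.

Lemma pascal_tensor_sum_tpow (R : realType) m n r (c x : 'I_r -> R) :
    (forall k, (k <= m * n.-1)%N -> (k`!)%:R = \sum_(i < r) c i ^+ m * x i ^+ k) ->
  forall idx, pascal_tensor R m n idx =
    \sum_(i < r) tpow R m n (row i (\matrix_(l, j) (c l * x l ^+ j / (j`!)%:R))) idx.
Proof.
move=> moments idx; set S := (\sum_(k < m) (idx k : nat))%N.
have le_S : (S <= m * n.-1)%N.
  rewrite -[m in (m * _)%N]card_ord -sum_nat_const; apply: leq_sum => k _.
  by rewrite -ltnS prednK ?ltn_ord // (leq_ltn_trans _ (ltn_ord (idx k))).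
rewrite /pascal_tensor -/S moments // mulr_suml; apply: eq_bigr => i _.
rewrite /tpow [in RHS](eq_bigr (fun k => c i * x i ^+ idx k / ((idx k)`!)%:R)).
  by rewrite prodf_div big_split /= prodr_const card_ord prodrXr.
by move=> k _; rewrite !mxE.
Qed.

Theorem theorem3p1 (R : realType) (m n : nat) :
  (2 <= m)%N -> (2 <= n)%N ->
  strongly_completely_positive R m n (pascal_tensor R m n).
Proof.
move=> m_ge2 n_ge2; split; first exact: pascal_tensor_symmetric.
have m_gt0 : (0 < m)%N by rewrite (leq_trans _ m_ge2).
have mn_gt0 : (0 < m * n)%N by rewrite muln_gt0 m_gt0 (leq_trans _ n_ge2).
have [x [w [x_inj x_gt0 w_gt0 moments]]] := laguerre_gauss_quadrature R mn_gt0.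
have [c c_gt0 c_exp] : exists2 c : 'I_(m * n) -> R,
    forall i, 0 < c i & forall i, c i ^+ m = w i.
  exists (fun i => s2val (nth_root m.-1 (w_gt0 i))) => i;
    by case: nth_root => //= y _; rewrite prednK.
exists (m * n)%N, (\matrix_(i, j) (c i * x i ^+ j / (j`!)%:R)); split; [|split].
- move=> i j; rewrite mxE divr_ge0 ?mulr_ge0 ?exprn_ge0 //; exact: ltW.
- apply: mxrank_scaled_Vandermonde.
  + by rewrite leq_pmull.
  + by move=> i j /x_inj /val_inj.
  + by move=> i; rewrite lt0r_neq0.
  + by move=> j; rewrite invr_eq0 pnatr_eq0 -lt0n fact_gt0.
- apply: pascal_tensor_sum_tpow => k le_k; rewrite moments.
    by apply: eq_bigr => i _; rewrite c_exp.
  rewrite (leq_ltn_trans le_k) // -addnn (leq_trans _ (leq_addr _ _)) //.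
  by rewrite ltn_pmul2l // prednK // (leq_trans _ n_ge2).
Qed.
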